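(* Let $J$ be a stable monomial ideal of $R=k[x_1,\dots,x_n]$ and let $d\ge1$. Let $T_1,\ldots,T_r$ be the monomials which form a $k$-basis of $\left((J:x_n)/J\right)_{d-1}$ (i.e. the monomials of degree $d-1$ in $(J:x_n)\setminus J$). Then $$\{x_nT_1,\ldots,x_nT_r\}=\{T\in \mathcal G(J)_d \mid x_n \text{ divides } T\}.$$ In particular $\dim_k \left((J:x_n)/J\right)_{d-1}= |\{T\in \mathcal G(J)_d \mid x_n\text{ divides } T\}|$.
   Context: For a monomial $u=x_1^{a_1}\cdots x_n^{a_n}$, $m(u)=\max\{j: a_j>0\}$. A monomial ideal $J$ is stable if for every monomial $w\in J$ and every $j<m(w)$, the monomial $x_jw/x_{m(w)}$ lies in $J$. $\mathcal G(J)$ is the set of minimal monomial generators of $J$ and $\mathcal G(J)_d$ those of degree $d$. *)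

From mathcomp Require Import all_boot all_order.
From mathcomp Require Import boolp.
Set Implicit Arguments. Unset Strict Implicit. Unset Printing Implicit Defensive.

(* Monomials of k[x_1,...,x_n] are encoded by their exponent vectors
   (x_{i+1} <-> index i : 'I_n).  Multiplication of monomials is addition
   of exponent vectors. *)
Definition mono (n : nat) := {ffun 'I_n -> nat}.

Definition mdeg n (u : mono n) : nat := \sum_(i < n) u i.
Definition mmul n (u v : mono n) : mono n := [ffun i => u i + v i].
Definition xvar n (j : 'I_n) : mono n := [ffun i => nat_of_bool (i == j)].
Definition mdvd n (u v : mono n) : Prop := forall i, u i <= v i.

(* A monomial ideal J of k[x_1..x_n] is determined by the set of monomials it
   contains; this set is closed under multiplication by monomials. *)
Definition monomial_ideal n (J : pred (mono n)) : Prop :=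
  forall u v : mono n, J u -> J (mmul u v).

(* w * x_j / x_i  (used with x_i dividing w) *)
Definition mshift n (w : mono n) (j i : 'I_n) : mono n :=
  [ffun k => w k - nat_of_bool (k == i) + nat_of_bool (k == j)].

Definition is_mmax n (w : mono n) (i : 'I_n) : Prop :=
  0 < w i /\ forall k : 'I_n, i < k -> w k = 0.

Definition stable n (J : pred (mono n)) : Prop :=
  forall (w : mono n) (i j : 'I_n), J w -> is_mmax w i -> j < i -> J (mshift w j i).

Definition colon n (J : pred (mono n)) (j : 'I_n) : pred (mono n) :=
  fun u => J (mmul u (xvar j)).

Definition mingen n (J : pred (mono n)) (u : mono n) : Prop :=
  J u /\ forall v : mono n, J v -> mdvd v u -> v = u.

Definition lift_box n b (v : {ffun 'I_n -> 'I_b}) : mono n :=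
  [ffun i => nat_of_ord (v i)].

(* dim_k ((J : x_n)/J)_{d-1}: the number of monomials of degree d-1 in
   (J : x_n) \ J (they form a k-basis).  Such monomials have all exponents < d. *)
Definition dim_colon_quot n (J : pred (mono n.+1)) (d : nat) : nat :=
  #|[set v : {ffun 'I_n.+1 -> 'I_d} |
      (mdeg (lift_box v) == d.-1) && colon J ord_max (lift_box v) && ~~ J (lift_box v)]|.

(* |{T in G(J)_d | x_n divides T}|; such T have all exponents <= d. *)
Definition card_gens_xn n (J : pred (mono n.+1)) (d : nat) : nat :=
  #|[set v : {ffun 'I_n.+1 -> 'I_d.+1} |
      `[< mingen J (lift_box v) >] && (mdeg (lift_box v) == d) && (0 < v ord_max)]|.

(* Write T = x_n T'.  Then T lies in J iff T' lies in (J : x_n), so the point is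
   that a monomial T of J divisible by x_n is a minimal generator iff T/x_n is
   not in J.  A monomial of J is a minimal generator iff no T/x_i with x_i | T
   lies in J; and if T/x_i lies in J for some i < n, then m(T/x_i) = n and
   stability, replacing x_n by x_i, puts T/x_n in J.  The dimension count is the
   bijection T' |-> x_n T' between bounded exponent vectors. *)
From mathcomp Require Import all_boot all_order.
From mathcomp Require Import boolp.
From mathcomp Require Import zify.

Set Implicit Arguments.
Unset Strict Implicit.
Unset Printing Implicit Defensive.

Section Monomials.
Variable n : nat.
Implicit Types (u v : mono n) (J : pred (mono n)).

(* u / x_i; the truncated subtraction makes it u when x_i does not divide u. *)
Definition mdivx u (i : 'I_n) : mono n := [ffun k => u k - (k == i)].

Lemma mdegM u v : mdeg (mmul u v) = mdeg u + mdeg v.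
Proof. by rewrite /mdeg -big_split; apply: eq_bigr => i _; rewrite ffunE. Qed.

Lemma mdegX (j : 'I_n) : mdeg (xvar j) = 1.
Proof.
rewrite /mdeg (bigD1 j) //= ffunE eqxx big1 // => i ij.
by rewrite ffunE (negbTE ij).
Qed.

Lemma leq_mdeg u (i : 'I_n) : u i <= mdeg u.
Proof. by rewrite /mdeg (bigD1 i) //= leq_addr. Qed.

Lemma mmulC u v : mmul u v = mmul v u.
Proof. by apply/ffunP => i; rewrite !ffunE addnC. Qed.

Lemma mulX_mdivx u i : 0 < u i -> mmul (xvar i) (mdivx u i) = u.
Proof.
move=> ui; apply/ffunP => k; rewrite !ffunE.
by case: (eqVneq k i) => [->|_] /=; [exact: subnKC | rewrite subn0].
Qed.

Lemma mdivx_mulX u i : mdivx (mmul (xvar i) u) i = u.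
Proof. by apply/ffunP => k; rewrite !ffunE addKn. Qed.

Lemma mdivx_mdvd u i : mdvd (mdivx u i) u.
Proof. by move=> k; rewrite ffunE leq_subr. Qed.

Lemma mdvd_mdivx u v i : mdvd v u -> v i < u i -> mdvd v (mdivx u i).
Proof.
move=> vu vui k; rewrite ffunE.
by case: (eqVneq k i) => [->|_] /=; [lia | rewrite subn0].
Qed.

Lemma monomial_ideal_mdvd J u v : monomial_ideal J -> J u -> mdvd u v -> J v.
Proof.
move=> idJ Ju uv.
suff -> : v = mmul u [ffun k => v k - u k] by apply: idJ.
by apply/ffunP => k; rewrite !ffunE subnKC.
Qed.

Lemma mingenP J u : monomial_ideal J ->
  mingen J u <-> J u /\ forall i, 0 < u i -> ~ J (mdivx u i).
Proof.
move=> idJ; split=> [[Ju minu] | [Ju noJdiv]].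
  split=> // i ui Jdiv.
  have /ffunP /(_ i) := minu _ Jdiv (mdivx_mdvd u i).
  by rewrite ffunE eqxx; move: ui; case: (u i) => // m _; rewrite subn1 => /n_Sn.
split=> // v Jv vu; apply/ffunP => k; apply/eqP; rewrite eqn_leq vu /=.
case: (pickP (fun i => v i < u i)) => [i vui | vu']; last by rewrite leqNgt vu'.
case: (noJdiv i); first exact: leq_ltn_trans vui.
exact: monomial_ideal_mdvd idJ Jv (mdvd_mdivx vu vui).
Qed.

Lemma mshift_mdivx u (i j : 'I_n) :
  0 < u i -> i != j -> mshift (mdivx u i) i j = mdivx u j.
Proof.
move=> ui ij; apply/ffunP => k; rewrite !ffunE.
case: (eqVneq k i) => [->|_]; last by rewrite subn0 addn0.
by rewrite (negbTE ij) /=; lia.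
Qed.

End Monomials.

Section StableIdeals.
Variables (n : nat) (J : pred (mono n.+1)).
Hypotheses (idJ : monomial_ideal J) (stJ : stable J).
Implicit Types u : mono n.+1.

Lemma is_mmax_ord_max u : 0 < u ord_max -> is_mmax u ord_max.
Proof. by split=> // k; rewrite ltnNge -ltnS ltn_ord. Qed.

Lemma stable_mdivx u i :
  0 < u i -> 0 < u ord_max -> J (mdivx u i) -> J (mdivx u ord_max).
Proof.
move=> ui umax Jui; case: (eqVneq i ord_max) => [<- //|imax].
rewrite -(mshift_mdivx ui imax); apply: stJ => //; last first.
  by rewrite ltn_neqAle -ltnS ltn_ord andbT; apply: contra imax => /eqP/val_inj->.
by apply: is_mmax_ord_max; rewrite ffunE eq_sym (negbTE imax) subn0.
Qed.

Lemma stable_mingenP u :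
  0 < u ord_max -> mingen J u <-> J u /\ ~ J (mdivx u ord_max).
Proof.
move=> umax; rewrite mingenP //; split=> [[Ju /(_ _ umax)] // | [Ju notJ]].
by split=> // i ui /(stable_mdivx ui umax).
Qed.

Lemma mingen_mulX_ord_max u :
  mingen J (mmul (xvar ord_max) u) <-> colon J ord_max u /\ ~ J u.
Proof.
rewrite stable_mingenP ?ffunE ?eqxx // mdivx_mulX /colon mmulC.
by split=> -[].
Qed.

Lemma mingen_xn_degP (d : nat) (T : mono n.+1) :
  (mingen J T /\ mdeg T = d.+1 /\ 0 < T ord_max) <->
  (exists T' : mono n.+1,
     [/\ mdeg T' = d, colon J ord_max T', ~ J T'
       & T = mmul (xvar ord_max) T']).
Proof.
split=> [[minT [degT Tmax]] | [T' [degT' colT' notJT' ->]]].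
  set T' := mdivx T ord_max.
  have TE : T = mmul (xvar ord_max) T' by rewrite mulX_mdivx.
  exists T'; move: minT degT; rewrite TE mingen_mulX_ord_max mdegM mdegX.
  by case=> colT notJT [].
rewrite mingen_mulX_ord_max mdegM mdegX degT' !ffunE eqxx.
by do !split.
Qed.

End StableIdeals.

Section ExponentBoxes.
Variables (n b : nat).

Lemma lift_box_inj c : injective (@lift_box n c).
Proof.
move=> v w /ffunP vw; apply/ffunP => i; apply/val_inj.
by have := vw i; rewrite !ffunE.
Qed.

Definition box_mulX (j : 'I_n) (v : {ffun 'I_n -> 'I_b.+1}) :
  {ffun 'I_n -> 'I_b.+2} := [ffun i => inord (v i + (i == j))].

Lemma lift_box_mulX j v :
  lift_box (box_mulX j v) = mmul (xvar j) (lift_box v).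
Proof.
apply/ffunP => i; rewrite !ffunE inordK addnC //.
by have := ltn_ord (v i); case: (i == j) => /=; lia.
Qed.

Lemma card_box_mulX (j : 'I_n) (P : pred (mono n))
    (Q : pred {ffun 'I_n -> 'I_b.+2}) :
  (forall u, P u -> forall i, u i <= b) ->
  (forall w, Q w <-> exists2 u, P u & lift_box w = mmul (xvar j) u) ->
  #|[set v : {ffun 'I_n -> 'I_b.+1} | P (lift_box v)]| = #|[set w | Q w]|.
Proof.
move=> Pbound QP.
have box_mulX_inj : injective (box_mulX j).
  move=> v w /(congr1 (@lift_box _ _)); rewrite !lift_box_mulX => /ffunP vw.
  apply: lift_box_inj; apply/ffunP => i.
  by have := vw i; rewrite !ffunE; apply: addnI.
rewrite -(card_imset _ box_mulX_inj); apply: eq_card => w; rewrite inE.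
apply/imsetP/idP => [[v] | /QP [u Pu wE]].
  by rewrite inE => Pv ->; apply/QP; exists (lift_box v); rewrite ?lift_box_mulX.
pose v : {ffun 'I_n -> 'I_b.+1} := [ffun i => inord (u i)].
have vE : lift_box v = u.
  by apply/ffunP => i; rewrite !ffunE inordK // ltnS Pbound.
by exists v; rewrite ?inE ?vE //; apply: lift_box_inj; rewrite lift_box_mulX vE.
Qed.

End ExponentBoxes.

Theorem lemma3p8 (n : nat) (J : pred (mono n.+1)) (d : nat) :
  monomial_ideal J -> stable J -> 1 <= d ->
  (forall T : mono n.+1,
     (mingen J T /\ mdeg T = d /\ 0 < T ord_max) <->
     (exists T' : mono n.+1,
        [/\ mdeg T' = d.-1, colon J ord_max T', ~ J T'
          & T = mmul (xvar ord_max) T'])) /\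
  dim_colon_quot J d = card_gens_xn J d.
Proof.
case: d => [//|d] idJ stJ _.
have gensP := mingen_xn_degP idJ stJ d.
split=> //; apply: (card_box_mulX (j := ord_max)
  (P := fun u => (mdeg u == d) && colon J ord_max u && ~~ J u)).
  by move=> u /andP [/andP [/eqP <- _] _] i; apply: leq_mdeg.
move=> w; have -> : (0 < w ord_max) = (0 < lift_box w ord_max) by rewrite ffunE.
split=> [/andP [/andP [/asboolP minw /eqP degw] wmax] | [T' PT' wE]].
  have [T' [degT' colT' notJT' ->]] := (gensP _).1 (conj minw (conj degw wmax)).
  by exists T'; rewrite /= ?degT' ?colT' ?eqxx //=; apply/negP.
move: PT' => /andP [/andP [/eqP degT' colT'] /negP notJT'].
have [minw [degw wmax]] := (gensP _).2 (ex_intro _ T' (And4 degT' colT' notJT' wE)).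
by rewrite degw eqxx wmax !andbT; apply/asboolP.
Qed.
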